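(* (1) Let $\mathbf S=(S,\vee,K)$ be a closure semilattice, and for $n\ge1$ and $a,b_1,\dots,b_n\in S$ set $a\sqsubseteq^n b_1,\dots,b_n$ iff $a\le Kb_1\vee\dots\vee Kb_n$. Then $(S,\vee,(\sqsubseteq^n)_{n\ge1})$ is a principal regular multi-argument specialization semilattice. In particular this applies when $\mathbf S$ is a closure space $(\mathcal P(X),\cup,K)$. (2) If $\mathbf T$ is another closure semilattice and $\varphi:\mathbf S\to\mathbf T$ is a homomorphism of closure semilattices (i.e. $\varphi(a\vee b)=\varphi(a)\vee\varphi(b)$ and $\varphi(Ka)=K\varphi(a)$ for all $a,b$), then $\varphi$ is a homomorphism between the associated multi-argument specialization semilattices defined as in (1).
   Context: A closure operation on a poset is extensive ($x\le Kx$), idempotent ($KKx=Kx$) and isotone. A closure semilattice is a join semilattice with a closure operation; a closure space is $(\mathcal P(X),\cup,K)$ with $K$ a closure operation on $\mathcal P(X)$. A multi-argument specialization semilattice is a join semilattice $(M,\vee)$ (order $a\le b$ iff $a\vee b=b$) with, for each $n\ge1$, an $(n+1)$-ary relation $a\sqsubseteq^n b_1,\dots,b_n$ (also written $a\sqsubseteq b_1,\dots,b_n$) such that: (M1) $a\sqsubseteq a$; (M2) $a\sqsubseteq b_1,\dots,b_n$ and $b_1\sqsubseteq c$ imply $a\sqsubseteq c,b_2,\dots,b_n$; (M3) $a\le b$ and $b\sqsubseteq c_1,\dots,c_m$ imply $a\sqsubseteq c_1,\dots,c_m$; (M4) $a\sqsubseteq b_1,\dots,b_n$ implies $a\sqsubseteq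 b_{\sigma1},\dots,b_{\sigma n}$ for every permutation $\sigma$; (M5) $a\sqsubseteq b_1,\dots,b_n,b_n$ implies $a\sqsubseteq b_1,\dots,b_n$; (M6) $a\sqsubseteq b_1,\dots,b_n$ implies $a\sqsubseteq b_1,\dots,b_n,b_{n+1}$; (M7) $a\sqsubseteq b_1,\dots,b_n$ and $a_1\sqsubseteq b_1,\dots,b_n$ imply $a\vee a_1\sqsubseteq b_1,\dots,b_n$. It is principal if for every $x$ there is a $\le$-largest $y$ with $y\sqsubseteq^1 x$; this $y$ is denoted $Kx$. A principal one is regular if $a\sqsubseteq^n b_1,\dots,b_n$ holds iff $a\le Kb_1\vee\dots\vee Kb_n$, for all $n$ and elements. A homomorphism of multi-argument specialization semilattices is a join-preserving map $\varphi$ such that $a\sqsubseteq^n b_1,\dots,b_n$ implies $\varphi(a)\sqsubseteq^n\varphi(b_1),\dots,\varphi(b_n)$ for all $n$. *)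

From HB Require Import structures.
From mathcomp Require Import all_boot all_order.
Set Implicit Arguments. Unset Strict Implicit. Unset Printing Implicit Defensive.
Import Order.Theory.
Local Open Scope order_scope.

Definition closure_op (d : Order.disp_t) (S : porderType d) (K : S -> S) : Prop :=
  [/\ (forall x, x <= K x), (forall x, K (K x) = K x)
    & (forall x y, x <= y -> K x <= K y)].

Definition joinl (d : Order.disp_t) (S : joinSemilatticeType d) (b : S) (bs : seq S) : S :=
  foldl (fun acc x => acc `|` x) b bs.

(* A multi-argument relation is encoded as  rel a b bs  meaning
   a ⊑^n b, bs_1, ..., bs_{n-1}  where n = (size bs).+1 >= 1.
   The arity n is thus the length of the nonempty list  b :: bs. *)
Definition mrel (S : Type) := S -> S -> seq S -> Prop.

Definition is_mss (d : Order.disp_t) (S : joinSemilatticeType d) (rel : mrel S) : Prop :=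
  (forall a : S, rel a a [::]) /\
  (forall (a b1 c : S) bs, rel a b1 bs -> rel b1 c [::] -> rel a c bs) /\
  (forall (a b c : S) cs, a <= b -> rel b c cs -> rel a c cs) /\
  (forall (a b b' : S) bs bs', perm_eq (b :: bs) (b' :: bs') ->
              rel a b bs -> rel a b' bs') /\
  (forall (a b1 bn : S) bs, rel a b1 (rcons (rcons bs bn) bn) ->
              rel a b1 (rcons bs bn)) /\
  (* M5, case n = 1 *) (forall (a b : S), rel a b [:: b] -> rel a b [::]) /\
  (forall (a b1 b : S) bs, rel a b1 bs -> rel a b1 (rcons bs b)) /\
  (forall (a a1 b : S) bs, rel a b bs -> rel a1 b bs -> rel (a `|` a1) b bs).

Definition principal_op (d : Order.disp_t) (S : joinSemilatticeType d)
    (rel : mrel S) (K : S -> S) : Prop :=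
  forall x : S, rel (K x) x [::] /\ (forall y, rel y x [::] -> y <= K x).

Definition principal (d : Order.disp_t) (S : joinSemilatticeType d) (rel : mrel S) : Prop :=
  forall x : S, exists y : S, rel y x [::] /\ (forall z, rel z x [::] -> z <= y).

Definition principal_regular (d : Order.disp_t) (S : joinSemilatticeType d)
    (rel : mrel S) : Prop :=
  principal rel /\
  exists K : S -> S, principal_op rel K /\
    forall (a b : S) bs, rel a b bs <-> a <= joinl (K b) (map K bs).

Definition mss_hom (d1 d2 : Order.disp_t) (S : joinSemilatticeType d1)
    (T : joinSemilatticeType d2) (relS : mrel S) (relT : mrel T) (phi : S -> T) : Prop :=
  (forall a b : S, phi (a `|` b) = phi a `|` phi b) /\
  (forall (a b : S) bs, relS a b bs -> relT (phi a) (phi b) (map phi bs)).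

Definition induced_rel (d : Order.disp_t) (S : joinSemilatticeType d) (K : S -> S) : mrel S :=
  fun a b bs => a <= joinl (K b) (map K bs).

(* Everything reduces to the join [joinl (K b) (map K bs)]: it only depends on
   the set of arguments, which gives the structural axioms M4-M6; extensivity
   of K gives M1 and monotonicity plus idempotency give the cut rule M2.  The
   relation is regular by construction, with K itself as principal operator.
   A join morphism commuting with K maps [joinl (K b) (map K bs)] to the
   corresponding join in the target, and is monotone, hence preserves the
   relation; this part uses no closure axiom. *)

From mathcomp Require Import all_boot all_order.

Set Implicit Arguments.
Unset Strict Implicit.
Unset Printing Implicit Defensive.

Import Order.Theory.
Local Open Scope order_scope.

Section Joinl.

Variables (d : Order.disp_t) (S : joinSemilatticeType d).

Lemma joinl_le (b : S) (bs : seq S) (c : S) :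
  (joinl b bs <= c) = (b <= c) && all (<= c) bs.
Proof.
elim: bs b => [|x bs IH] b /=; first by rewrite andbT.
by rewrite /joinl /= -/(joinl _ _) IH leUx andbA.
Qed.

Lemma le_joinl (b : S) (bs : seq S) (x : S) : x \in b :: bs -> x <= joinl b bs.
Proof.
have /[!joinl_le] /andP[le_b /allP le_bs] := lexx (joinl b bs).
by rewrite inE => /predU1P[->|/le_bs].
Qed.

Lemma joinl_subset (b c : S) (bs cs : seq S) :
  {subset b :: bs <= c :: cs} -> joinl b bs <= joinl c cs.
Proof.
move=> sub; rewrite joinl_le le_joinl ?sub ?mem_head //=.
by apply/allP => x bs_x; apply/le_joinl/sub; rewrite inE bs_x orbT.
Qed.

End Joinl.

Lemma joinl_morph (d1 d2 : Order.disp_t) (S : joinSemilatticeType d1)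
    (T : joinSemilatticeType d2) (phi : S -> T) :
  {morph phi : a b / a `|` b} ->
  forall (b : S) bs, phi (joinl b bs) = joinl (phi b) (map phi bs).
Proof.
move=> phiU b bs; elim: bs b => [|x bs IH] b //=.
by rewrite /joinl /= -!/(joinl _ _) IH phiU.
Qed.

Lemma join_morph_homo (d1 d2 : Order.disp_t) (S : joinSemilatticeType d1)
    (T : joinSemilatticeType d2) (phi : S -> T) :
  {morph phi : a b / a `|` b} -> {homo phi : a b / a <= b}.
Proof. by move=> phiU a b /join_idPr <-; rewrite phiU leUl. Qed.

Section InducedRelation.

Variables (d : Order.disp_t) (S : joinSemilatticeType d) (K : S -> S).

Local Notation rel := (induced_rel K).

Lemma induced_rel_subset (a b c : S) (bs cs : seq S) :
  {subset b :: bs <= c :: cs} -> rel a b bs -> rel a c cs.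
Proof. by move=> sub /le_trans; apply; apply/joinl_subset/(sub_map (f := K) sub). Qed.

Lemma induced_rel_le (a b c : S) (cs : seq S) : a <= b -> rel b c cs -> rel a c cs.
Proof. exact: le_trans. Qed.

Lemma induced_rel_join (a a1 b : S) (bs : seq S) :
  rel a b bs -> rel a1 b bs -> rel (a `|` a1) b bs.
Proof. by rewrite /induced_rel leUx => -> ->. Qed.

Lemma induced_rel_principal_op : principal_op rel K.
Proof. by move=> x; split=> [|y]; rewrite /induced_rel /=. Qed.

Lemma induced_rel_principal_regular : principal_regular rel.
Proof.
split; last by exists K; split; [exact: induced_rel_principal_op|].
by move=> x; exists (K x); apply: induced_rel_principal_op.
Qed.

Hypothesis closure_K : closure_op K.

Lemma induced_rel_refl (a : S) : rel a a [::].
Proof. by case: closure_K => K_ext _ _; exact: K_ext. Qed.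

Lemma induced_rel_cut (a b1 c : S) (bs : seq S) :
  rel a b1 bs -> rel b1 c [::] -> rel a c bs.
Proof.
case: closure_K => _ K_idem K_homo le_a le_b1; apply: le_trans le_a _.
have le_Kb1 : K b1 <= K c by rewrite -[leRHS]K_idem; exact: K_homo.
rewrite joinl_le (le_trans le_Kb1) ?le_joinl ?mem_head //=.
by apply/allP => x bs_x; apply: le_joinl; rewrite inE bs_x orbT.
Qed.

Lemma induced_rel_mss : is_mss rel.
Proof.
split; first exact: induced_rel_refl.
split; first exact: induced_rel_cut.
split; first exact: induced_rel_le.
split.
  by move=> a b b' bs bs' /perm_mem eq_bs; apply: induced_rel_subset => x; rewrite eq_bs.
split.
  move=> a b1 bn bs; apply: induced_rel_subset => x.
  by rewrite !(inE, mem_rcons) => /or4P[] ->; rewrite ?orbT.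
split; first by move=> a b; apply: induced_rel_subset => x; rewrite !inE orbb.
split.
  move=> a b1 b bs; apply: induced_rel_subset => x.
  by rewrite !(inE, mem_rcons) orbCA => ->; rewrite orbT.
exact: induced_rel_join.
Qed.

End InducedRelation.

Lemma induced_rel_hom (d1 d2 : Order.disp_t) (S : joinSemilatticeType d1)
    (T : joinSemilatticeType d2) (KS : S -> S) (KT : T -> T) (phi : S -> T) :
  {morph phi : a b / a `|` b} -> (forall a, phi (KS a) = KT (phi a)) ->
  mss_hom (induced_rel KS) (induced_rel KT) phi.
Proof.
move=> phiU phiK; split=> // a b bs /(join_morph_homo phiU).
by rewrite /induced_rel joinl_morph // phiK -map_comp (eq_map phiK) map_comp.
Qed.

Theorem proposition3p3 :
  (forall (d : Order.disp_t) (S : joinSemilatticeType d) (K : S -> S),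
      closure_op K ->
      is_mss (induced_rel K) /\ principal_regular (induced_rel K)) /\
  (forall (d1 d2 : Order.disp_t) (S : joinSemilatticeType d1) (T : joinSemilatticeType d2)
      (KS : S -> S) (KT : T -> T) (phi : S -> T),
      closure_op KS -> closure_op KT ->
      (forall a b : S, phi (a `|` b) = phi a `|` phi b) ->
      (forall a : S, phi (KS a) = KT (phi a)) ->
      mss_hom (induced_rel KS) (induced_rel KT) phi).
Proof.
split.
  move=> d S K closure_K.
  by split; [exact: induced_rel_mss | exact: induced_rel_principal_regular].
by move=> d1 d2 S T KS KT phi _ _; exact: induced_rel_hom.
Qed.
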